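(* Let $\ell^{\infty}$ be the space of bounded real sequences $x=(x_i)_{i\in\mathbb{N}}$, and for $p\in(0,\infty)$, $n\in\mathbb{N}$ let $$\|x\|_{\infty,p,n}:=\sup_{j\in\mathbb{N}}\Big(\frac{1}{n}\sum_{i=j}^{j+(n-1)}|x_i|^{p}\Big)^{1/p}.$$ Let $p\in[1,\infty)$ and $m,n\in\mathbb{N}$ with $n\leq m$. (i) If $n$ is a factor of $m$, i.e. $m=dn$ for some $d\in\mathbb{N}$, then $\|x\|_{\infty,p,m}\leq\|x\|_{\infty,p,n}$ for all $x\in\ell^{\infty}$. (ii) If $n$ is not a factor of $m$, then there exist $x,y\in\ell^{\infty}$ such that $\|x\|_{\infty,p,n}<\|x\|_{\infty,p,m}$ and $\|y\|_{\infty,p,m}<\|y\|_{\infty,p,n}$.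
   Context: $\mathbb{N}=\{1,2,3,\dots\}$. *)

From HB Require Import structures.
From mathcomp Require Import all_boot all_order all_algebra.
From mathcomp Require Import all_classical all_reals all_analysis.
Set Implicit Arguments. Unset Strict Implicit. Unset Printing Implicit Defensive.
Import Order.TTheory GRing.Theory Num.Theory.
Local Open Scope classical_set_scope.
Local Open Scope ring_scope.

(* A real sequence x = (x_i)_{i in N}, N = {1,2,...}; we use x : nat -> R and
   only look at indices i >= 1 (the value x 0 plays no role). *)
Definition bounded_seq (R : realType) (x : nat -> R) : Prop :=
  exists M : R, forall i : nat, (0 < i)%N -> `|x i| <= M.

Definition norm_inf_p_n (R : realType) (p : R) (n : nat) (x : nat -> R) : R :=
  sup [set ((n%:R)^-1 * \sum_(j <= i < j + n) (`|x i| `^ p)) `^ (p^-1)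
      | j in [set j : nat | (0 < j)%N]].

(* (i) A window of length d n is the disjoint union of d windows of length n, each of p-mass
   at most n ||x||_n^p, so its mean p-th power is at most ||x||_n^p.
   (ii) Write m = q n + r with 0 < r < n. The n-periodic indicator of the residues below r has
   mean r / n on every window of length n, but mean (q + 1) r / m > r / n on the window of
   length m starting at n. The unit impulse at 1 has largest window means 1 / n and 1 / m. *)
From HB Require Import structures.
From mathcomp Require Import all_boot all_order all_algebra.
From mathcomp Require Import all_classical all_reals all_analysis.
From mathcomp Require Import zify.

Set Implicit Arguments.
Unset Strict Implicit.
Unset Printing Implicit Defensive.
Import Order.TTheory GRing.Theory Num.Theory.
Local Open Scope ring_scope.

Lemma big_nat_periodic (V : zmodType) (f : nat -> V) (n j : nat) :
  (forall i, f (i + n)%N = f i) ->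
  \sum_(j <= i < j + n) f i = \sum_(0 <= i < n) f i.
Proof.
move=> f_per; elim: j => [//|j IH].
have shift_left : \sum_(j <= i < (j + n).+1) f i
    = f j + \sum_(j.+1 <= i < j.+1 + n) f i.
  by rewrite (big_cat_nat _ (n := j.+1)) ?big_nat1 ?addSn //= ltnS leq_addr.
have shift_right : \sum_(j <= i < (j + n).+1) f i
    = \sum_(j <= i < j + n) f i + f (j + n)%N.
  by rewrite big_nat_recr //= leq_addr.
by apply: (@addrI _ (f j)); rewrite -shift_left shift_right IH f_per addrC.
Qed.

Lemma big_nat_blocks (V : nmodType) (f : nat -> V) (n j d : nat) :
  \sum_(j <= i < j + d * n) f i =
  \sum_(k < d) \sum_(j + k * n <= i < j + k * n + n) f i.
Proof.
elim: d => [|d IH]; first by rewrite mul0n addn0 big_geq // big_ord0.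
rewrite big_ord_recr /= -IH (big_cat_nat _ (n := j + d * n)) /=; try lia.
by rewrite mulSn [(n + _)%N]addnC addnA.
Qed.

Lemma sumr_natr_count (R : nzSemiRingType) (s : seq nat) (P : pred nat) :
  \sum_(i <- s) ((P i)%:R : R) = (count P s)%:R.
Proof. by elim: s => [|a s IH]; rewrite ?big_nil // big_cons IH /= natrD. Qed.

Section WindowNorms.
Variable R : realType.
Implicit Types (p b : R) (x : nat -> R).

Lemma powR_invr_le p (a b : R) : 0 < p -> 0 <= a -> 0 <= b ->
  (a `^ p^-1 <= b) = (a <= b `^ p).
Proof.
move=> p_gt0 a_ge0 b_ge0; apply/idP/idP => h.
- have -> : a = (a `^ p^-1) `^ p by rewrite -powRrM mulVf ?gt_eqF // powRr1.
  by apply: ge0_ler_powR; rewrite ?nnegrE ?powR_ge0 // ltW.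
- have -> : b = (b `^ p) `^ p^-1 by rewrite -powRrM mulfV ?gt_eqF // powRr1.
  by apply: ge0_ler_powR; rewrite ?nnegrE ?powR_ge0 ?invr_ge0 // ltW.
Qed.

Lemma powR_norm_natr_bool p (c : bool) : p != 0 -> `|(c%:R : R)| `^ p = c%:R.
Proof. by move=> p_neq0; case: c; rewrite ?normr1 ?normr0 ?powR1 ?powR0. Qed.

Lemma bool_seq_bounded (f : nat -> bool) : bounded_seq (fun i => ((f i)%:R : R)).
Proof. by exists 1 => i _; case: (f i); rewrite ?normr1 ?normr0. Qed.

Definition window_norm p (n : nat) x (j : nat) : R :=
  ((n%:R)^-1 * \sum_(j <= i < j + n) (`|x i| `^ p)) `^ (p^-1).

Lemma window_norm_le p n x j b : 0 < p -> (0 < n)%N -> 0 <= b ->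
  (window_norm p n x j <= b) = (\sum_(j <= i < j + n) `|x i| `^ p <= n%:R * b `^ p).
Proof.
move=> p_gt0 n_gt0 b_ge0.
rewrite /window_norm powR_invr_le ?ler_pdivrMl ?ltr0n //.
by rewrite mulr_ge0 ?invr_ge0 // sumr_ge0 // => i _; rewrite powR_ge0.
Qed.

Lemma norm_inf_p_n_le p n x b :
  (forall j, (0 < j)%N -> window_norm p n x j <= b) -> norm_inf_p_n p n x <= b.
Proof.
move=> window_le; apply: ge_sup; first by exists (window_norm p n x 1); exists 1%N.
by move=> _ [j j_gt0 <-]; apply: window_le.
Qed.

Lemma window_norm_le_norm p n x j : 0 < p -> (0 < n)%N -> bounded_seq x ->
  (0 < j)%N -> window_norm p n x j <= norm_inf_p_n p n x.
Proof.
move=> p_gt0 n_gt0 [M x_le_M] j_gt0.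
have M_ge0 : 0 <= M by apply: le_trans (x_le_M 1%N isT).
apply: ub_le_sup; last by exists j.
exists M => _ [k k_gt0 <-]; rewrite window_norm_le //.
apply: le_trans (_ : \sum_(k <= i < k + n) M `^ p <= _).
  apply: ler_sum_nat => i /andP [k_le_i _]; apply: (ge0_ler_powR (ltW p_gt0)).
  - exact: normr_ge0.
  - exact: M_ge0.
  - by apply: x_le_M; apply: leq_trans k_le_i.
by rewrite sumr_const_nat addKn mulr_natl.
Qed.

Lemma norm_inf_p_n_ge0 p n x : 0 < p -> (0 < n)%N -> bounded_seq x ->
  0 <= norm_inf_p_n p n x.
Proof.
move=> p_gt0 n_gt0 x_bd.
exact: le_trans (powR_ge0 _ _) (window_norm_le_norm p_gt0 n_gt0 x_bd (ltn0Sn 0)).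
Qed.

Lemma norm_inf_p_n_dvd_le p m n x : 0 < p -> (0 < n)%N -> (0 < m)%N ->
  (n %| m)%N -> bounded_seq x -> norm_inf_p_n p m x <= norm_inf_p_n p n x.
Proof.
move=> p_gt0 n_gt0 m_gt0 /dvdnP [d m_eq] x_bd; subst m.
set S := norm_inf_p_n p n x.
have S_ge0 : 0 <= S by exact: norm_inf_p_n_ge0.
have block_le k j : (0 < j)%N ->
    \sum_(j + k * n <= i < j + k * n + n) `|x i| `^ p <= n%:R * S `^ p.
  move=> j_gt0; rewrite -window_norm_le //.
  by apply: window_norm_le_norm => //; apply: leq_trans (leq_addr _ _).
apply: norm_inf_p_n_le => j j_gt0; rewrite window_norm_le ?big_nat_blocks //.
apply: le_trans (ler_sum _ (fun (k : 'I_d) _ => block_le k j j_gt0)) _.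
by rewrite sumr_const card_ord natrM -mulrA [in leRHS]mulr_natl.
Qed.

Definition residue_indicator (n r : nat) (i : nat) : R := ((i %% n < r)%N)%:R.

Definition impulse (i : nat) : R := ((i == 1)%N)%:R.

Lemma residue_indicator_window_sum p n r j : p != 0 -> (r <= n)%N ->
  \sum_(j <= i < j + n) `|residue_indicator n r i| `^ p = r%:R.
Proof.
move=> p_neq0 r_le_n; under eq_bigr do rewrite powR_norm_natr_bool //.
rewrite (@big_nat_periodic _ (residue_indicator n r)); last first.
  by move=> i; rewrite /residue_indicator modnDr.
rewrite /index_iota subn0 sumr_natr_count.
rewrite (@eq_in_count _ _ (fun i => (i < 0 + r)%N)); last first.
  by move=> i; rewrite mem_iota add0n => /andP [_ i_lt_n]; rewrite modn_small.
by rewrite -size_filter filter_iota_ltn // size_iota.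
Qed.

Lemma residue_indicator_long_window_sum p n r q : p != 0 -> (r < n)%N ->
  \sum_(n <= i < n + (q * n + r)) `|residue_indicator n r i| `^ p
    = (q.+1 * r)%:R.
Proof.
move=> p_neq0 r_lt_n.
rewrite (big_cat_nat _ (n := n + q * n)) /=; try lia.
rewrite big_nat_blocks (eq_bigr (fun=> r%:R)); last first.
  by move=> k _; apply: residue_indicator_window_sum => //; apply: ltnW.
rewrite sumr_const card_ord.
under eq_big_nat => i /andP [lo hi].
  rewrite powR_norm_natr_bool // /residue_indicator.
  have -> : (i %% n < r)%N.
    have -> : i = (q.+1 * n + (i - q.+1 * n))%N by rewrite mulSn; lia.
    by rewrite modnMDl modn_small; lia.
  over.
rewrite sumr_const_nat addnA addKn -mulrnA -mulrnDr.
by congr (_ *+ _); rewrite mulSn addnC mulnC.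
Qed.

Lemma impulse_window_sum_le1 p j k : p != 0 ->
  \sum_(j <= i < j + k) `|impulse i| `^ p <= 1.
Proof.
move=> p_neq0; under eq_bigr do rewrite powR_norm_natr_bool //.
rewrite sumr_natr_count (count_uniq_mem _ (iota_uniq _ _)).
by case: (_ \in _).
Qed.

Lemma impulse_window_sum1 p k : p != 0 -> (0 < k)%N ->
  \sum_(1 <= i < 1 + k) `|impulse i| `^ p = 1.
Proof.
move=> p_neq0 k_gt0; under eq_bigr do rewrite powR_norm_natr_bool //.
rewrite sumr_natr_count (count_uniq_mem _ (iota_uniq _ _)) mem_iota.
by case: k k_gt0.
Qed.

Lemma norm_inf_p_n_residue_indicator_lt p n q r : 0 < p -> (0 < r)%N -> (r < n)%N ->
  norm_inf_p_n p n (residue_indicator n r)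
    < norm_inf_p_n p (q * n + r) (residue_indicator n r).
Proof.
move=> p_gt0 r_gt0 r_lt_n.
have p_neq0 : p != 0 by rewrite gt_eqF.
have n_gt0 : (0 < n)%N by apply: leq_ltn_trans r_lt_n.
have m_gt0 : (0 < q * n + r)%N by rewrite addn_gt0 r_gt0 orbT.
apply: (@le_lt_trans _ _ ((n%:R^-1 * r%:R) `^ p^-1)).
  apply: norm_inf_p_n_le => j _.
  by rewrite /window_norm residue_indicator_window_sum // ltnW.
apply: (@lt_le_trans _ _ (((q * n + r)%:R^-1 * (q.+1 * r)%:R) `^ p^-1)); last first.
  have := @window_norm_le_norm p (q * n + r) (residue_indicator n r) n p_gt0 m_gt0
    (bool_seq_bounded _) n_gt0.
  by rewrite /window_norm residue_indicator_long_window_sum.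
apply: gt0_ltr_powR; rewrite ?invr_gt0 ?nnegrE ?mulr_ge0 ?invr_ge0 //.
rewrite mulrC ltr_pdivrMr ?ltr0n // -mulrA mulrC ltr_pdivlMr ?ltr0n // -!natrM ltr_nat.
nia.
Qed.

Lemma norm_inf_p_n_impulse_lt p m n : 0 < p -> (0 < n)%N -> (n < m)%N ->
  norm_inf_p_n p m impulse < norm_inf_p_n p n impulse.
Proof.
move=> p_gt0 n_gt0 n_lt_m.
have p_neq0 : p != 0 by rewrite gt_eqF.
have m_gt0 : (0 < m)%N by apply: leq_trans n_lt_m.
apply: (@le_lt_trans _ _ (m%:R^-1 `^ p^-1)).
  apply: norm_inf_p_n_le => j _; rewrite window_norm_le ?powR_ge0 //.
  rewrite -powRrM mulVf ?gt_eqF // powRr1 ?invr_ge0 // mulfV ?pnatr_eq0 -?lt0n //.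
  exact: impulse_window_sum_le1.
apply: (@lt_le_trans _ _ (n%:R^-1 `^ p^-1)); last first.
  have := @window_norm_le_norm p n impulse 1 p_gt0 n_gt0 (bool_seq_bounded _) isT.
  by rewrite /window_norm impulse_window_sum1 // mulr1.
apply: gt0_ltr_powR; rewrite ?invr_gt0 ?nnegrE ?invr_ge0 //.
by rewrite ltf_pV2 ?posrE ?ltr0n // ltr_nat.
Qed.

End WindowNorms.

Theorem lemma1p3 (R : realType) (p : R) (m n : nat) :
  1 <= p -> (0 < n)%N -> (0 < m)%N -> (n <= m)%N ->
  ((n %| m)%N ->
     forall x : nat -> R, bounded_seq x ->
       norm_inf_p_n p m x <= norm_inf_p_n p n x) /\
  (~~ (n %| m)%N ->
     exists x y : nat -> R, bounded_seq x /\ bounded_seq y /\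
       norm_inf_p_n p n x < norm_inf_p_n p m x /\
       norm_inf_p_n p m y < norm_inf_p_n p n y).
Proof.
move=> p_ge1 n_gt0 m_gt0 n_le_m; have p_gt0 : 0 < p by apply: lt_le_trans p_ge1.
split=> [n_dvd_m x x_bd | n_ndvd_m]; first exact: norm_inf_p_n_dvd_le.
have n_lt_m : (n < m)%N.
  by rewrite ltn_neqAle n_le_m andbT; apply: contraNneq n_ndvd_m => ->.
have m_eq : m = (m %/ n * n + m %% n)%N := divn_eq m n.
exists (residue_indicator R n (m %% n)), (impulse R).
split; first exact: bool_seq_bounded.
split; first exact: bool_seq_bounded.
split.
  rewrite [X in _ < norm_inf_p_n p X _]m_eq.
  apply: norm_inf_p_n_residue_indicator_lt => //; last exact: ltn_pmod.
  by rewrite lt0n -/(dvdn n m).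
exact: norm_inf_p_n_impulse_lt.
Qed.
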